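(* Let $G$ be a finite group and let $p$ be a fixed prime divisor of $|G|$. Suppose that every maximal subgroup of $G$ is normal in $G$ or has order not divisible by $p$. Then for each prime divisor $q$ of $|G|$, $G$ is $q$-nilpotent or $q$-closed.
   Context: For a prime $q$, a finite group $G$ is $q$-nilpotent if it has a normal $q$-complement (a normal subgroup of order coprime to $q$ and index a power of $q$), and $q$-closed if its Sylow $q$-subgroup is normal in $G$. *)

From mathcomp Require Import all_boot all_fingroup all_solvable.
Set Implicit Arguments. Unset Strict Implicit. Unset Printing Implicit Defensive.
Local Open Scope group_scope.

Definition q_nilpotent (gT : finGroupType) (q : nat) (G : {set gT}) : Prop :=
  exists K : {group gT}, [/\ K <| G, coprime #|K| q & q.-nat #|G : K|].

Definition q_closed (gT : finGroupType) (q : nat) (G : {set gT}) : Prop :=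
  exists P : {group gT}, P \in 'Syl_q(G) /\ P <| G.

From mathcomp Require Import all_boot all_fingroup all_solvable.
Set Implicit Arguments.
Unset Strict Implicit.
Unset Printing Implicit Defensive.
Local Open Scope group_scope.

(* Frattini argument: if p divides #|H|, H contains a Sylow subgroup R of G
   and 'N_G(R) normalises H, then a maximal subgroup M containing 'N_G(H) has
   order divisible by p, hence is normal, and G = M 'N_G(R) = M is absurd; so
   H <| G.  Taking for H a Sylow p-subgroup P shows that G is p-closed.  For
   q <> p and a prime r <> q, taking H = P R, a q'-group because P <| G, puts
   every Sylow r-subgroup into 'O_q'(G), so G / 'O_q'(G) is a q-group. *)

Lemma Sylow_dvdn_card (gT : finGroupType) (G P : {group gT}) (p : nat) :
  prime p -> p %| #|G| -> p.-Sylow(G) P -> p %| #|P|.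
Proof.
move=> p_pr pG sylP; rewrite (card_Hall sylP) p_part dvdn_exp //.
by rewrite logn_gt0 mem_primes p_pr pG cardG_gt0.
Qed.

Lemma pnat_index_Sylow_sub (gT : finGroupType) (G K : {group gT}) (q : nat) :
  K \subset G ->
  (forall (r : nat) (R : {group gT}), r != q -> r.-Sylow(G) R -> R \subset K) ->
  q.-nat #|G : K|.
Proof.
move=> sKG sylK; apply/pnatP; first by rewrite indexg_gt0.
move=> r r_pr; rewrite inE; apply: contraLR => rq.
have [R sylR] := Sylow_exists r G; have [_ _ r'GR] := and3P sylR.
by rewrite -p'natE // (pnat_dvd _ r'GR) // indexgS ?(sylK r).
Qed.

Lemma q_nilpotent_pcore (gT : finGroupType) (G : {group gT}) (q : nat) :
  prime q -> q.-nat #|G : 'O_q^'(G)| -> q_nilpotent q G.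
Proof.
move=> q_pr qGO; exists 'O_q^'(G)%G; split=> //; first exact: pcore_normal.
exact: p'nat_coprime (pcore_pgroup _ _) (pnat_id q_pr).
Qed.

Section MaximalSubgroupsNormalOrP'.

Variables (gT : finGroupType) (G : {group gT}) (p : nat).
Hypothesis maxG : forall M : {group gT}, maximal M G -> M <| G \/ ~~ (p %| #|M|).

Lemma normal_Frattini (H R : {group gT}) (r : nat) :
  p %| #|H| -> H \subset G -> r.-Sylow(G) R -> R \subset H ->
  'N_G(R) \subset 'N(H) -> H <| G.
Proof.
move=> pH sHG sylR sRH nHNR; rewrite /normal sHG /=.
have [eqNG | [M maxM sNM]] := maximal_exists (subsetIl G 'N(H)).
  by rewrite -{1}eqNG subsetIr.
have sHM : H \subset M by apply: subset_trans sNM; rewrite subsetI sHG normG.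
have nMG : M <| G.
  case: (maxG maxM) => // /negP[]; exact: dvdn_trans pH (cardSg sHM).
have sylRM : r.-Sylow(M) R.
  by apply: pHall_subl sylR; rewrite ?(subset_trans sRH) // proper_sub ?(maxgroupp maxM).
have sNRM : 'N_G(R) \subset M by apply: subset_trans sNM; rewrite subsetI subsetIl.
have := maxgroupp maxM; rewrite -(Frattini_arg nMG sylRM) mulGSid //.
by rewrite properE subxx.
Qed.

Hypotheses (p_pr : prime p) (pG : p %| #|G|).

Lemma normal_Sylow (P : {group gT}) : p.-Sylow(G) P -> P <| G.
Proof.
move=> sylP; have pP := Sylow_dvdn_card p_pr pG sylP.
exact: normal_Frattini pP (pHall_sub sylP) sylP (subxx P) (subsetIr G _).
Qed.

Lemma Sylow_sub_pcore (q r : nat) (R : {group gT}) :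
  q != p -> r != q -> r.-Sylow(G) R -> R \subset 'O_q^'(G).
Proof.
move=> qp rq sylR; have [P sylP] := Sylow_exists p G.
have nPG := normal_Sylow sylP.
have sPG := pHall_sub sylP; have sRG := pHall_sub sylR.
have nPR : R \subset 'N(P) := subset_trans sRG (normal_norm nPG).
have nPRG : (P <*> R)%G <| G.
  apply: normal_Frattini sylR (joing_subr P R) _.
  - exact: dvdn_trans (Sylow_dvdn_card p_pr pG sylP) (cardSg (joing_subl P R)).
  - by rewrite join_subG sPG.
  - by rewrite normsY ?subsetIr // (subset_trans (subsetIl G _)) ?normal_norm.
have q'PR : q^'.-group (P <*> R).
  rewrite /= norm_joinEr // pgroupM.
  rewrite (pi_pgroup (pHall_pgroup sylP)) ?(pi_pgroup (pHall_pgroup sylR)) //.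
  by rewrite !inE eq_sym.
exact: subset_trans (joing_subr P R) (pcore_max q'PR nPRG).
Qed.

End MaximalSubgroupsNormalOrP'.

Theorem theorem1p10 (gT : finGroupType) (G : {group gT}) (p : nat) :
  prime p -> p %| #|G| ->
  (forall M : {group gT}, maximal M G -> M <| G \/ ~~ (p %| #|M|)) ->
  forall q : nat, prime q -> q %| #|G| -> q_nilpotent q G \/ q_closed q G.
Proof.
move=> p_pr pG maxG q q_pr _.
have [-> | qp] := eqVneq q p.
  have [P sylP] := Sylow_exists p G.
  by right; exists P; rewrite inE sylP (normal_Sylow maxG).
left; apply: q_nilpotent_pcore q_pr _.
apply: pnat_index_Sylow_sub (pcore_sub _ _) _ => r R.
exact: (Sylow_sub_pcore maxG p_pr pG qp).
Qed.
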